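(* Let $n\ge1$ and $3\le l\le d$. Every $w\in\mathbb{R}^{nd}$ satisfying $y\,(w\cdot x)\ge1$ for all $(x,y)$ in the support of $\mathcal{D}$ has $\|w\|^2\ge n$. In particular, $\hat w=\arg\min\{\|w\|^2 : w\in\mathbb{R}^{nd},\ y\,(w\cdot x)\ge1 \text{ for all } (x,y)\text{ in the support of }\mathcal{D}\}$ satisfies $\|\hat w\|^2\ge n$.
   Context: Let $o_1,\dots,o_l\in\mathbb{R}^d$ be orthonormal vectors. Inputs are $x=(x[1],\dots,x[n])\in\mathbb{R}^{nd}$ with blocks $x[j]\in\mathbb{R}^d$; $w\cdot x$ is the standard inner product on $\mathbb{R}^{nd}$. The distribution $\mathcal{D}$ on $\mathbb{R}^{nd}\times\{\pm1\}$: $y$ uniform on $\{\pm1\}$; given $y=1$, an index $j_+$ uniform on $\{1,\dots,n\}$ is drawn, $x[j_+]=o_1$, and for each $j\ne j_+$ independently $x[j]=o_{i_j}$ with $i_j$ uniform on $\{3,\dots,l\}$; given $y=-1$, the same with $o_2$ instead of $o_1$. *)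

From HB Require Import structures.
From mathcomp Require Import all_boot all_order all_algebra.
Set Implicit Arguments. Unset Strict Implicit. Unset Printing Implicit Defensive.
Import Order.TTheory GRing.Theory Num.Theory.
Local Open Scope ring_scope.

Definition dotv (R : realFieldType) (d : nat) (u v : 'rV[R]_d) : R :=
  \sum_(k < d) u 0 k * v 0 k.

(* o_1, ..., o_l (1-based indices, as in the paper) are orthonormal in R^d *)
Definition orthonormal_family (R : realFieldType) (d l : nat)
    (o : nat -> 'rV[R]_d) : Prop :=
  forall i j, (1 <= i <= l)%N -> (1 <= j <= l)%N ->
    dotv (o i) (o j) = (if i == j then 1 else 0).

(* An element x of R^{nd} is given by its n blocks x[1..n] in R^d
   (block j+1 of the paper is index j : 'I_n here). *)
Definition blockvec (R : realFieldType) (n d : nat) := 'I_n -> 'rV[R]_d.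

Definition bdot (R : realFieldType) (n d : nat) (w x : blockvec R n d) : R :=
  \sum_(j < n) dotv (w j) (x j).

Definition bnorm2 (R : realFieldType) (n d : nat) (w : blockvec R n d) : R :=
  bdot w w.

Definition pattern (R : realFieldType) (n d l : nat) (o : nat -> 'rV[R]_d)
    (a : nat) (x : blockvec R n d) : Prop :=
  exists jp : 'I_n, x jp = o a /\
    forall j : 'I_n, j != jp -> exists i, (3 <= i <= l)%N /\ x j = o i.

Definition in_support (R : realFieldType) (n d l : nat) (o : nat -> 'rV[R]_d)
    (x : blockvec R n d) (y : R) : Prop :=
  (y = 1 /\ pattern l o 1 x) \/ (y = -1 /\ pattern l o 2 x).

Definition feasible (R : realFieldType) (n d l : nat) (o : nat -> 'rV[R]_d)
    (w : blockvec R n d) : Prop :=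
  forall (x : blockvec R n d) (y : R), in_support l o x y -> 1 <= y * bdot w x.

(* A feasible w must separate two inputs that differ only in one block j, where one carries
   o_1 and the other o_2; so w[j]·o_1 - w[j]·o_2 >= 2.  Since o_1, o_2 are orthonormal,
   Bessel's inequality then gives |w[j]|^2 >= (w[j]·o_1)^2 + (w[j]·o_2)^2 >= 2, and summing
   over the n blocks yields |w|^2 >= 2n. *)
From HB Require Import structures.
From mathcomp Require Import all_boot all_order all_algebra.
From mathcomp Require Import ring lra zify.
Set Implicit Arguments. Unset Strict Implicit. Unset Printing Implicit Defensive.
Import Order.TTheory GRing.Theory Num.Theory.
Local Open Scope ring_scope.

Lemma dotv_bessel2 (R : realFieldType) (d : nat) (w p q : 'rV[R]_d) :
  dotv p p = 1 -> dotv q q = 1 -> dotv p q = 0 ->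
  (dotv w p) ^+ 2 + (dotv w q) ^+ 2 <= dotv w w.
Proof.
move=> pp1 qq1 pq0.
have residual_expand (a b : R) :
    \sum_(k < d) (w 0 k - a * p 0 k - b * q 0 k) ^+ 2 =
    dotv w w - 2 * a * dotv w p - 2 * b * dotv w q
    + a * a * dotv p p + 2 * a * b * dotv p q + b * b * dotv q q.
  rewrite /dotv !mulr_sumr -!sumrN -!big_split /=.
  by apply: eq_bigr => k _; ring.
have residual_ge0 :
    0 <= \sum_(k < d) (w 0 k - dotv w p * p 0 k - dotv w q * q 0 k) ^+ 2.
  by apply: sumr_ge0 => k _; apply: sqr_ge0.
by move: residual_ge0; rewrite residual_expand pp1 qq1 pq0; lra.
Qed.

Lemma bdotB_block (R : realFieldType) (n d : nat) (w x x' : blockvec R n d) (jp : 'I_n) :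
  (forall j, j != jp -> x j = x' j) ->
  bdot w x - bdot w x' = dotv (w jp) (x jp) - dotv (w jp) (x' jp).
Proof.
move=> eq_off; rewrite /bdot (bigD1 jp) // [X in _ - X](bigD1 jp) //=.
rewrite [X in _ - (_ + X)](eq_bigr (fun j => dotv (w j) (x j))); first by ring.
by move=> j /eq_off ->.
Qed.

Lemma sqr_add_ge_of_sub_ge (R : realFieldType) (a b : R) :
  2 <= a - b -> 2 <= a ^+ 2 + b ^+ 2.
Proof.
move=> gap.
have nonneg : 0 <= (a + b) ^+ 2 + (a - b - 2) * (a - b + 2).
  by rewrite addr_ge0 ?sqr_ge0 // mulr_ge0; lra.
have -> : a ^+ 2 + b ^+ 2 = 2 + ((a + b) ^+ 2 + (a - b - 2) * (a - b + 2)) / 2.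
  by rewrite !expr2; field.
by rewrite lerDl divr_ge0.
Qed.

Section Feasible.
Variables (R : realFieldType) (n d l : nat) (o : nat -> 'rV[R]_d).
Hypothesis l_ge3 : (3 <= l)%N.
Hypothesis o_orthonormal : orthonormal_family l o.

Definition single_block_input (jp : 'I_n) (a : nat) : blockvec R n d :=
  fun j => if j == jp then o a else o 3.

Lemma pattern_single_block_input jp a : pattern l o a (single_block_input jp a).
Proof.
exists jp; split; first by rewrite /single_block_input eqxx.
move=> j /negbTE j_jp; exists 3%N; split; first by apply/andP.
by rewrite /single_block_input j_jp.
Qed.

Lemma feasible_block_gap (w : blockvec R n d) jp : feasible l o w ->
  2 <= dotv (w jp) (o 1) - dotv (w jp) (o 2).
Proof.
move=> w_feas.
have pos := w_feas _ 1 (or_introl (conj erefl (pattern_single_block_input jp 1))).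
have neg := w_feas _ (-1) (or_intror (conj erefl (pattern_single_block_input jp 2))).
have := @bdotB_block R n d w (single_block_input jp 1) (single_block_input jp 2) jp.
rewrite /single_block_input eqxx => <-; last by move=> j /negbTE ->.
by move: pos neg; rewrite mul1r mulN1r; lra.
Qed.

Lemma feasible_block_norm2 (w : blockvec R n d) jp : feasible l o w ->
  2 <= dotv (w jp) (w jp).
Proof.
move=> w_feas.
have o11 : dotv (o 1) (o 1) = 1 by rewrite o_orthonormal //; apply/andP; lia.
have o22 : dotv (o 2) (o 2) = 1 by rewrite o_orthonormal //; apply/andP; lia.
have o12 : dotv (o 1) (o 2) = 0 by rewrite o_orthonormal //; apply/andP; lia.
apply: le_trans _ (dotv_bessel2 (w jp) o11 o22 o12).
exact/sqr_add_ge_of_sub_ge/feasible_block_gap.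
Qed.

Lemma feasible_bnorm2_ge (w : blockvec R n d) : feasible l o w ->
  2 * n%:R <= bnorm2 w.
Proof.
move=> w_feas; have -> : 2 * n%:R = \sum_(j < n) (2 : R).
  by rewrite sumr_const card_ord mulr_natr.
by apply: ler_sum => j _; rewrite feasible_block_norm2.
Qed.

End Feasible.

Theorem proposition6p1 (R : realFieldType) (n d l : nat) (o : nat -> 'rV[R]_d) :
  (1 <= n)%N -> (3 <= l)%N -> (l <= d)%N ->
  orthonormal_family l o ->
  (forall w : blockvec R n d, feasible l o w -> n%:R <= bnorm2 w) /\
  (forall what : blockvec R n d,
     feasible l o what ->
     (forall w : blockvec R n d, feasible l o w -> bnorm2 what <= bnorm2 w) ->
     n%:R <= bnorm2 what).
Proof.
move=> _ l_ge3 _ o_orthonormal.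
have bound (w : blockvec R n d) : feasible l o w -> n%:R <= bnorm2 w.
  move=> w_feas; apply: le_trans (feasible_bnorm2_ge l_ge3 o_orthonormal w_feas).
  by rewrite ler_peMl ?ler0n // ler1n.
by split=> // what /bound.
Qed.
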